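(* Let $\delta\in[1/3,1]$, $\alpha>0$ with $\alpha\delta<1$, $\eta_0^{2}=\frac{1+\alpha^{2}}{1+\delta^{2}}$, and let $x\mapsto B_0(x)$ be a continuous function with values in $[0,\sqrt{1-\eta_0^2\delta^2}]$. Set $\widetilde{A_\ast}(x)=\sqrt{1-(1+\delta^2)B_0(x)^2}$ and let $\lambda_r(x),\lambda_i(x)\ge0$ be defined by $2\lambda_r^{2}=\sqrt2\,\widetilde{A_\ast}+\varepsilon^{2}B_0^{2}(1+\delta^{2})^{2}$, $2\lambda_i^{2}=\sqrt2\,\widetilde{A_\ast}-\varepsilon^{2}B_0^{2}(1+\delta^{2})^{2}$. Let $\mathbf S_0(x,s)$, $\mathbf S_1(x,s)$ be the solution (monodromy) operators on $\mathbb{R}^2$ of $X'=\mathbf L_0(x)X$ and $Y'=\mathbf L_1(x)Y$, where $$\mathbf L_0=\begin{pmatrix}\lambda_r&\lambda_i\\-\lambda_i&\lambda_r\end{pmatrix},\qquad \mathbf L_1=\begin{pmatrix}-\lambda_r&\lambda_i\\-\lambda_i&-\lambda_r\end{pmatrix},$$ i.e. $\partial_x\mathbf S_j(x,s)=\mathbf L_j(x)\mathbf S_j(x,s)$, $\mathbf S_j(x,x)=\mathbb I$. If $\alpha\ge\frac{10}{3}\varepsilon^2$ and $\varepsilon>0$ is small enough, then, with $\sigma=\frac{(\alpha\delta)^{1/2}}{2^{1/4}}$ and the operator norm induced by the Euclidean norm, $$\|\mathbf S_0(x,s)\|\le e^{\sigma(x-s)}\ \text{ for } x<s,\qquad \|\mathbf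 S_1(x,s)\|\le e^{-\sigma(x-s)}\ \text{ for } s<x.$$ *)

From HB Require Import structures.
From mathcomp Require Import all_boot all_order all_algebra.
From mathcomp Require Import all_classical all_reals all_analysis.
Set Implicit Arguments. Unset Strict Implicit. Unset Printing Implicit Defensive.
Import Order.TTheory GRing.Theory Num.Theory.
Import numFieldNormedType.Exports.
Local Open Scope classical_set_scope.
Local Open Scope ring_scope.

Definition mx2 {R : realType} (a b c d : R) : 'M[R]_2 :=
  \matrix_(i < 2, j < 2)
    (if i == ord0 then (if j == ord0 then a else b)
                  else (if j == ord0 then c else d)).

Definition enorm2 {R : realType} (v : 'cV[R]_2) : R :=
  Num.sqrt (v ord0 ord0 ^+ 2 + v (lift ord0 ord0) ord0 ^+ 2).

Definition opnorm2 {R : realType} (A : 'M[R]_2) : R :=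
  sup [set enorm2 (A *m v) | v in [set v : 'cV[R]_2 | enorm2 v <= 1]].

Definition solution_operator {R : realType} (L : R -> 'M[R]_2)
  (S : R -> R -> 'M[R]_2) : Prop :=
  (forall s x : R, is_derive x (1 : R) (fun y => S y s) (L x *m S x s)) /\
  (forall x, S x x = 1%:M).

From HB Require Import structures.
From mathcomp Require Import all_boot all_order all_algebra.
From mathcomp Require Import all_classical all_reals all_analysis.
From mathcomp Require Import ring lra.
Set Implicit Arguments. Unset Strict Implicit. Unset Printing Implicit Defensive.
Import Order.TTheory GRing.Theory Num.Theory.
Import numFieldNormedType.Exports.
Local Open Scope classical_set_scope.
Local Open Scope ring_scope.

(* Both L_j are [± lam_r] times the identity plus [lam_i] times a rotation
   generator, so for X(x) = S_j(x, s) v the rotation part drops out of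
   d/dx |X|^2 = 2 X.(L_j X) = ± 2 lam_r |X|^2, and Gronwall's argument bounds
   |X(x)| by e^{±k (x - s)} |v| as soon as lam_r >= k.  The constraint on
   B_0 reads (1 + delta^2) B_0^2 <= 1 - (alpha delta)^2, whence
   A_* >= alpha delta and 2 lam_r^2 >= sqrt 2 alpha delta, i.e. lam_r >= sigma.
   The eps^2-term only enlarges lam_r, so no smallness of eps is needed. *)

Section Gronwall.
Context {R : realType}.

Lemma is_derive_ext (f g : R -> R) (x df dg : R) :
  is_derive x (1 : R) f df -> f =1 g -> df = dg -> is_derive x (1 : R) g dg.
Proof. by move=> + /funext <- <-. Qed.

Lemma nondecreasing_of_derive_ge0 (G dG : R -> R) :
  (forall y, is_derive y (1 : R) G (dG y)) -> (forall y, 0 <= dG y) ->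
  {homo G : a b / a <= b}.
Proof.
move=> dG_G dG_ge0 a b ab.
have [|c _ GbGa] := MVT_segment ab (fun y _ => dG_G y).
  apply/continuous_subspaceT => y.
  apply/differentiable_continuous/derivable1_diffP.
  by have [] := dG_G y.
by rewrite -subr_ge0 GbGa mulr_ge0 // subr_ge0.
Qed.

Lemma is_derive_mul_expR (F : R -> R) dF c y :
  is_derive y (1 : R) F dF ->
  is_derive y (1 : R) (fun z => F z * expR (c * z)) ((dF + c * F y) * expR (c * y)).
Proof.
move=> dFy.
have dlin : is_derive y (1 : R) ( *%R c) c.
  apply: is_derive_ext (is_deriveM (is_derive_cst c y 1) (is_derive_id y 1)) _ _ => //.
  by rewrite /GRing.scale /= mulr1 mulr0 addr0.
have dexp := is_derive1_comp (is_derive_expR (c * y)) dlin.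
apply: is_derive_ext (is_deriveM dFy dexp) _ _ => //.
by rewrite /GRing.scale /=; ring.
Qed.

Section LinearGrowth.
Variables (F g : R -> R) (c : R).
Hypothesis dF : forall y, is_derive y (1 : R) F (g y * F y).
Hypothesis F_ge0 : forall y, 0 <= F y.

Lemma le_mul_expR_backward :
  (forall y, c <= g y) -> forall x s, x <= s -> F x <= F s * expR (c * (x - s)).
Proof.
move=> c_le_g x s xs.
have dG_ge0 y : 0 <= (g y * F y + - c * F y) * expR (- c * y).
  by rewrite mulr_ge0 ?expR_ge0 // mulNr -mulrBl mulr_ge0 // subr_ge0.
have := nondecreasing_of_derive_ge0
  (fun y => is_derive_mul_expR (- c) (dF y)) dG_ge0 xs.
rewrite (_ : c * (x - s) = - c * s - - c * x); last by ring.
by rewrite expRB mulrA ler_pdivlMr ?expR_gt0.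
Qed.

Lemma le_mul_expR_forward :
  (forall y, g y <= c) -> forall x s, s <= x -> F x <= F s * expR (c * (x - s)).
Proof.
move=> g_le_c x s sx.
have dG_le0 y : 0 <= - ((g y * F y + - c * F y) * expR (- c * y)).
  rewrite oppr_ge0 mulr_le0_ge0 ?expR_ge0 // mulNr -mulrBl.
  by rewrite mulr_le0_ge0 // subr_le0.
have := nondecreasing_of_derive_ge0
  (fun y => is_deriveN (is_derive_mul_expR (- c) (dF y))) dG_le0 sx.
rewrite /= lerN2 (_ : c * (x - s) = - c * s - - c * x); last by ring.
by rewrite expRB mulrA ler_pdivlMr ?expR_gt0.
Qed.

End LinearGrowth.
End Gronwall.

Section RotationDilation.
Context {R : realType}.

Local Notation i0 := (@ord0 1).
Local Notation i1 := (lift (@ord0 1) (@ord0 0)).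

Definition sqnorm2 (v : 'cV[R]_2) : R := v i0 ord0 ^+ 2 + v i1 ord0 ^+ 2.

Lemma sqnorm2_ge0 v : 0 <= sqnorm2 v.
Proof. by rewrite addr_ge0 ?sqr_ge0. Qed.

Lemma opnorm2_le (A : 'M[R]_2) (b : R) : 0 <= b ->
  (forall v, sqnorm2 v <= 1 -> sqnorm2 (A *m v) <= b ^+ 2) -> opnorm2 A <= b.
Proof.
move=> b_ge0 Ab; apply: ge_sup.
  exists (enorm2 (A *m 0)), 0 => //=.
  by rewrite /enorm2 !mxE expr0n /= addr0 sqrtr0.
move=> _ [w /= w_le1 <-].
have {}w_le1 : sqnorm2 w <= 1.
  by move: w_le1; rewrite /enorm2 -{1}sqrtr1 ler_sqrt.
by rewrite /enorm2 -(ger0_norm b_ge0) -sqrtr_sqr ler_sqrt ?sqr_ge0 ?Ab.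
Qed.

Lemma mulmx2_col (A : 'M[R]_2) (v : 'cV[R]_2) k :
  (A *m v) k ord0 = A k i0 * v i0 ord0 + A k i1 * v i1 ord0.
Proof. by rewrite mxE big_ord_recl big_ord1. Qed.

Lemma is_derive_mulmx_entry (M : R -> 'M[R]_2) D (v : 'cV[R]_2) y k :
  is_derive y (1 : R) M D ->
  is_derive y (1 : R) (fun z => (M z *m v) k ord0) ((D *m v) k ord0).
Proof.
move=> [dM <-].
have dentry l : is_derive y (1 : R) (fun z => M z k l) ('D_1 M y k l).
  apply: DeriveDef; first exact: (derivable_mxP M y 1).1 dM k l.
  by rewrite derive_mx // mxE.
have := is_deriveD (is_deriveM (dentry i0) (is_derive_cst (v i0 ord0) y 1))
                   (is_deriveM (dentry i1) (is_derive_cst (v i1 ord0) y 1)).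
move/is_derive_ext; apply=> [z|]; first by rewrite mulmx2_col.
by rewrite mulmx2_col /GRing.scale /= !mulr0 !add0r mulrC [X in _ + X]mulrC.
Qed.

Section SolutionOperator.
Variables (r i : R -> R) (S : R -> R -> 'M[R]_2).
Hypothesis solS : solution_operator (fun x => mx2 (r x) (i x) (- i x) (r x)) S.

Lemma is_derive_sqnorm2_solution s v y :
  is_derive y (1 : R) (fun z => sqnorm2 (S z s *m v)) (2 * r y * sqnorm2 (S y s *m v)).
Proof.
have dX k := is_derive_mulmx_entry v k (solS.1 s y).
apply: is_derive_ext (is_deriveD (is_deriveX 2 (dX i0)) (is_deriveX 2 (dX i1))) _ _ => //.
rewrite /sqnorm2 /= /GRing.scale /= !mulmx2_col !mxE /=.
by rewrite !big_ord_recl !big_ord0 !mxE /=; ring.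
Qed.

Lemma opnorm2_solution_backward k :
  (forall y, k <= r y) ->
  forall x s, x <= s -> opnorm2 (S x s) <= expR (k * (x - s)).
Proof.
move=> k_le_r x s xs; apply: (opnorm2_le (expR_ge0 _)) => v v_le1.
have two_k_le y : 2 * k <= 2 * r y by have := k_le_r y; lra.
have := le_mul_expR_backward (is_derive_sqnorm2_solution s v)
  (fun y => sqnorm2_ge0 _) two_k_le xs.
rewrite (proj2 solS) mul1mx => /le_trans; apply.
by rewrite -expRM_natl mulrA ler_piMl ?expR_ge0.
Qed.

Lemma opnorm2_solution_forward k :
  (forall y, r y <= - k) ->
  forall x s, s <= x -> opnorm2 (S x s) <= expR (- (k * (x - s))).
Proof.
move=> r_le_k x s sx; apply: (opnorm2_le (expR_ge0 _)) => v v_le1.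
have two_r_le y : 2 * r y <= - (2 * k) by have := r_le_k y; lra.
have := le_mul_expR_forward (is_derive_sqnorm2_solution s v)
  (fun y => sqnorm2_ge0 _) two_r_le sx.
rewrite (proj2 solS) mul1mx => /le_trans; apply.
by rewrite -expRM_natl mulrN mulNr mulrA ler_piMl ?expR_ge0.
Qed.

End SolutionOperator.
End RotationDilation.

Section Eigenvalues.
Context {R : realType}.

Definition Astar (delta b : R) : R := Num.sqrt (1 - (1 + delta ^+ 2) * b ^+ 2).

Lemma mul_le_Astar (alpha delta eta0 b : R) :
  0 <= alpha * delta <= 1 -> eta0 ^+ 2 = (1 + alpha ^+ 2) / (1 + delta ^+ 2) ->
  0 <= b <= Num.sqrt (1 - eta0 ^+ 2 * delta ^+ 2) -> alpha * delta <= Astar delta b.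
Proof.
case/andP=> ad_ge0 ad_le1 eta0E /andP[b_ge0 b_le].
have d_gt0 : 0 < 1 + delta ^+ 2 by rewrite ltr_pwDl ?sqr_ge0.
have gapE : 1 - eta0 ^+ 2 * delta ^+ 2 = (1 - (alpha * delta) ^+ 2) / (1 + delta ^+ 2).
  by rewrite eta0E; field; rewrite gt_eqF.
have gap_ge0 : 0 <= 1 - eta0 ^+ 2 * delta ^+ 2.
  by rewrite gapE divr_ge0 ?(ltW d_gt0) // subr_ge0 expr_le1.
have b2_le : (1 + delta ^+ 2) * b ^+ 2 <= 1 - (alpha * delta) ^+ 2.
  rewrite mulrC -ler_pdivlMr // -gapE -(sqr_sqrtr gap_ge0).
  by rewrite ler_sqr // nnegrE sqrtr_ge0.
by rewrite /Astar -(ger0_norm ad_ge0) -sqrtr_sqr ler_sqrt; nra.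
Qed.

Lemma sqrt_div_sqrt_sqrt2_le (a A l e : R) :
  0 <= a -> a <= A -> 0 <= l -> 0 <= e -> 2 * l ^+ 2 = Num.sqrt 2 * A + e ->
  Num.sqrt a / Num.sqrt (Num.sqrt 2) <= l.
Proof.
move=> a_ge0 a_le l_ge0 e_ge0 lE.
have s2_gt0 : 0 < Num.sqrt (2 : R) by rewrite sqrtr_gt0.
have s2_sqr : Num.sqrt (2 : R) ^+ 2 = 2 by rewrite sqr_sqrtr.
rewrite -ler_sqr ?nnegrE ?divr_ge0 ?sqrtr_ge0 //.
rewrite expr_div_n !sqr_sqrtr ?sqrtr_ge0 // ler_pdivrMr //.
nra.
Qed.

End Eigenvalues.

Theorem lemma15 (R : realType) :
  exists eps0 : R, 0 < eps0 /\
  forall (eps delta alpha eta0 : R) (B0 lam_r lam_i : R -> R)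
         (S0 S1 : R -> R -> 'M[R]_2),
    0 < eps -> eps < eps0 ->
    1 / 3 <= delta <= 1 -> 0 < alpha -> alpha * delta < 1 ->
    eta0 ^+ 2 = (1 + alpha ^+ 2) / (1 + delta ^+ 2) ->
    continuous B0 ->
    (forall x, 0 <= B0 x <= Num.sqrt (1 - eta0 ^+ 2 * delta ^+ 2)) ->
    (forall x, 0 <= lam_r x /\ 0 <= lam_i x) ->
    (forall x, 2 * lam_r x ^+ 2 =
       Num.sqrt 2 * Num.sqrt (1 - (1 + delta ^+ 2) * B0 x ^+ 2)
       + eps ^+ 2 * B0 x ^+ 2 * (1 + delta ^+ 2) ^+ 2) ->
    (forall x, 2 * lam_i x ^+ 2 =
       Num.sqrt 2 * Num.sqrt (1 - (1 + delta ^+ 2) * B0 x ^+ 2)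
       - eps ^+ 2 * B0 x ^+ 2 * (1 + delta ^+ 2) ^+ 2) ->
    solution_operator (fun x => mx2 (lam_r x) (lam_i x) (- lam_i x) (lam_r x)) S0 ->
    solution_operator (fun x => mx2 (- lam_r x) (lam_i x) (- lam_i x) (- lam_r x)) S1 ->
    alpha >= 10 / 3 * eps ^+ 2 ->
    let sigma := Num.sqrt (alpha * delta) / Num.sqrt (Num.sqrt 2) in
    (forall x s, x < s -> opnorm2 (S0 x s) <= expR (sigma * (x - s))) /\
    (forall x s, s < x -> opnorm2 (S1 x s) <= expR (- (sigma * (x - s)))).
Proof.
exists 1; split=> // eps delta alpha eta0 B0 lam_r lam_i S0 S1 _ _ /andP[delta_ge _]
  alpha_gt0 ad_lt1 eta0E _ B0_bnd lam_ge0 lam_rE _ solS0 solS1 _ sigma.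
have ad_ge0 : 0 <= alpha * delta by rewrite mulr_ge0 ?ltW //; lra.
have sigma_le_lam_r y : sigma <= lam_r y.
  apply: sqrt_div_sqrt_sqrt2_le (lam_rE y) => //.
  - by apply: mul_le_Astar _ eta0E (B0_bnd y); rewrite ad_ge0 ltW.
  - exact: (lam_ge0 y).1.
  - by apply: mulr_ge0; [apply: mulr_ge0 |]; apply: sqr_ge0.
split=> x s xs.
- exact: (opnorm2_solution_backward solS0 sigma_le_lam_r (ltW xs)).
- by apply: (opnorm2_solution_forward solS1 _ (ltW xs)) => y; rewrite lerN2.
Qed.
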